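(* Let $ABC$ be a triangle with incenter $I$, and let $H_A, H_B, H_C$ be the orthocenters of the triangles $BIC$, $CIA$, $AIB$ respectively. Let $O_A, O_B, O_C$ be the circumcenters of the triangles $AH_BH_C$, $BH_CH_A$, $CH_AH_B$ respectively. Then the reflections of the Euler line of triangle $O_AO_BO_C$ in its sidelines $O_BO_C$, $O_CO_A$, $O_AO_B$ are the lines $H_AI$, $H_BI$, $H_CI$ respectively.
   Context: The Euler line of a triangle is the line through its circumcenter, centroid and orthocenter. *)

From mathcomp Require Import all_boot all_order all_algebra.
Set Implicit Arguments. Unset Strict Implicit. Unset Printing Implicit Defensive.
Import Order.TTheory GRing.Theory Num.Theory.
Local Open Scope ring_scope.

Section Plane.
Variable R : rcfType.

Definition point := (R * R)%type.

Definition padd (P Q : point) : point := (P.1 + Q.1, P.2 + Q.2).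
Definition psub (P Q : point) : point := (P.1 - Q.1, P.2 - Q.2).
Definition pscale (k : R) (P : point) : point := (k * P.1, k * P.2).
Definition dot (P Q : point) : R := P.1 * Q.1 + P.2 * Q.2.
Definition cross (P Q : point) : R := P.1 * Q.2 - P.2 * Q.1.
Definition sqdist (P Q : point) : R := dot (psub P Q) (psub P Q).
Definition dist (P Q : point) : R := Num.sqrt (sqdist P Q).

Definition collinear (P Q X : point) : Prop := cross (psub Q P) (psub X P) = 0.

Definition line (P Q : point) : point -> Prop := fun X => collinear P Q X.

Definition incenter (A B C : point) : point :=
  let a := dist B C in let b := dist C A in let c := dist A B in
  pscale (a + b + c)^-1 (padd (pscale a A) (padd (pscale b B) (pscale c C))).

Definition centroid (A B C : point) : point :=
  pscale (3%:R)^-1 (padd A (padd B C)).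

Definition is_orthocenter (H A B C : point) : Prop :=
  [/\ dot (psub H A) (psub B C) = 0,
      dot (psub H B) (psub C A) = 0 &
      dot (psub H C) (psub A B) = 0].

Definition is_circumcenter (O A B C : point) : Prop :=
  sqdist O A = sqdist O B /\ sqdist O A = sqdist O C.

Definition reflect_pt (P Q X : point) : point :=
  let t := dot (psub X P) (psub Q P) / sqdist Q P in
  let F := padd P (pscale t (psub Q P)) in
  psub (pscale 2%:R F) X.

Definition reflect_set (P Q : point) (L : point -> Prop) : point -> Prop :=
  fun X => exists2 Y, L Y & X = reflect_pt P Q Y.

End Plane.

From mathcomp Require Import all_boot all_order all_algebra.
From mathcomp Require Import ring.
From mathcomp.real_closed Require Import complex.
Import Order.TTheory GRing.Theory Num.Theory.
Set Implicit Arguments. Unset Strict Implicit. Unset Printing Implicit Defensive.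
Local Open Scope ring_scope.

(* Put the incenter I at the origin of the complex plane and let X, Y, Z be
   the unit normals of the sides BC, CA, AB, so that the sides are the tangent
   lines Re (z * conj X) = r to the incircle.  Then A = 2rYZ/(Y+Z) (and
   cyclically), and every further point is cut out by two linear equations in
   (z, conj z), which can be solved explicitly:
     H_A = 2rX^2(Y+Z) / ((X+Y)(Z+X)),
     O_A = 2rYZ(YZ-X^2) / ((X+Y)(Y+Z)(Z+X)),
     O   = -2rXYZ(X+Y+Z) / ((X+Y)(Y+Z)(Z+X))  (circumcenter of O_AO_BO_C).
   The reflections of O and of the centroid of O_AO_BO_C in O_BO_C are then
   checked to lie on the line I H_A by a rational identity in X, Y, Z; the
   other two sidelines follow by relabelling the triangle. *)

Ltac field_nz := field;
  repeat (apply/andP; split); rewrite ?oppr_eq0 ?mulf_neq0 ?invr_eq0 ?expf_neq0 ?pnatr_eq0 //.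

(* A point z of the plane is handled as the pair (z, conj z), the two entries
   being independent unknowns over an arbitrary field.  Thus [cdot p q] stands
   for 2 Re (p conj q), [ccross p q] for 2i Im (conj p q), [cnorm p] for |p|^2,
   [unitc Y] for a point of the unit circle, and [creflect p q x] for the
   mirror image of x in the line pq. *)
Section ConjugateCoordinates.
Variable K : numFieldType.
Implicit Types (p q u v x h o a : K * K) (Y Z : K).

Definition cdot p q : K := p.1 * q.2 + p.2 * q.1.
Definition ccross p q : K := p.2 * q.1 - p.1 * q.2.
Definition cnorm p : K := p.1 * p.2.
Definition unitc Y : K * K := (Y, Y^-1).
Definition ccentroid p q x : K * K := ((p.1 + q.1 + x.1) / 3, (p.2 + q.2 + x.2) / 3).
Definition creflect p q x : K * K :=
  (p.1 + (q - p).1 / (q - p).2 * (x - p).2, p.2 + (q - p).2 / (q - p).1 * (x - p).1).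

Lemma cdotBl h p u : cdot (h - p) u = cdot h u - cdot p u.
Proof. by rewrite /cdot /=; ring. Qed.

Lemma cdot_inj2 u v h h' : ccross u v != 0 ->
  cdot h u = cdot h' u -> cdot h v = cdot h' v -> h = h'.
Proof.
case: u v h h' => [u1 u2] [v1 v2] [h1 h2] [k1 k2]; rewrite /ccross /cdot /= => nz eu ev.
have d1 : (u2 * v1 - u1 * v2) * (h1 - k1) =
  v1 * (h1 * u2 + h2 * u1 - (k1 * u2 + k2 * u1)) - u1 * (h1 * v2 + h2 * v1 - (k1 * v2 + k2 * v1))
  by ring.
have d2 : (u2 * v1 - u1 * v2) * (h2 - k2) =
  u2 * (h1 * v2 + h2 * v1 - (k1 * v2 + k2 * v1)) - v2 * (h1 * u2 + h2 * u1 - (k1 * u2 + k2 * u1))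
  by ring.
rewrite eu ev !subrr !mulr0 subrr in d1 d2.
move/eqP: d1; move/eqP: d2; rewrite !mulf_eq0 (negbTE nz) !subr_eq0 /=.
by move=> /eqP -> /eqP ->.
Qed.

Lemma cnorm_subE o a p :
  cnorm (o - a) - cnorm (o - p) = cdot o (p - a) - (cnorm p - cnorm a).
Proof. by rewrite /cnorm /cdot /=; ring. Qed.

Lemma circumcenter_unique a p q o o' : ccross (p - a) (q - a) != 0 ->
  cnorm (o - a) = cnorm (o - p) -> cnorm (o - a) = cnorm (o - q) ->
  cnorm (o' - a) = cnorm (o' - p) -> cnorm (o' - a) = cnorm (o' - q) -> o = o'.
Proof.
have chord o1 p1 : cnorm (o1 - a) = cnorm (o1 - p1) ->
    cdot o1 (p1 - a) = cnorm p1 - cnorm a.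
  by move/eqP; rewrite -subr_eq0 cnorm_subE subr_eq0 => /eqP.
move=> nd /chord op /chord oq /chord o'p /chord o'q.
by apply: (cdot_inj2 nd); rewrite ?op ?oq ?o'p ?o'q.
Qed.

Lemma unitc_ccross_neq0 Y Z : ccross (unitc Y) (unitc Z) != 0 ->
  [/\ Y != 0, Z != 0, Y + Z != 0 & Y - Z != 0].
Proof.
move=> nd.
have nY : Y != 0 by apply: contraNneq nd => ->; rewrite /ccross /= invr0 !mul0r subrr.
have nZ : Z != 0 by apply: contraNneq nd => ->; rewrite /ccross /= invr0 !mulr0 subrr.
have e : ccross (unitc Y) (unitc Z) = - ((Y + Z) * (Y - Z) / (Y * Z)).
  by rewrite /ccross /=; field_nz.
by move: nd; rewrite e oppr_eq0 !mulf_eq0 !negb_or => /andP[/andP[-> ->] _].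
Qed.

End ConjugateCoordinates.

(* Coordinates centred at the incenter, r being the signed inradius and
   X, Y, Z the unit normals of BC, CA, AB: [vertexI Y Z] is A, [orthoI X Y Z]
   is H_A, [circumI X Y Z] is O_A and [centerI X Y Z] is the circumcenter O of
   O_AO_BO_C; cyclic shifts of (X, Y, Z) give the other points. *)
Section IncircleCoordinates.
Variables (K : numFieldType) (r : K).
Hypothesis r_neq0 : r != 0.
Implicit Types (X Y Z : K) (h o u : K * K).

Definition vertexI Y Z : K * K := (2 * r * Y * Z / (Y + Z), 2 * r / (Y + Z)).

Definition orthoI X Y Z : K * K :=
  (2 * r * X ^+ 2 * (Y + Z) / ((X + Y) * (Z + X)), 2 * r * (Y + Z) / ((X + Y) * (Z + X))).

Definition circumI X Y Z : K * K :=
  (2 * r * Y * Z * (Y * Z - X ^+ 2) / ((X + Y) * (Y + Z) * (Z + X)),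
   2 * r * (X ^+ 2 - Y * Z) / ((X + Y) * (Y + Z) * (Z + X))).

Definition centerI X Y Z : K * K :=
  (- (2 * r * X * Y * Z * (X + Y + Z)) / ((X + Y) * (Y + Z) * (Z + X)),
   - (2 * r * (X * Y + Y * Z + Z * X)) / ((X + Y) * (Y + Z) * (Z + X))).

Definition nonparallel3 X Y Z : Prop :=
  [/\ ccross (unitc Y) (unitc Z) != 0, ccross (unitc Z) (unitc X) != 0
    & ccross (unitc X) (unitc Y) != 0].

Lemma nonparallel3_rot X Y Z : nonparallel3 X Y Z -> nonparallel3 Y Z X.
Proof. by case. Qed.

Lemma nonparallel3_neq0 X Y Z : nonparallel3 X Y Z ->
  [/\ X != 0, Y != 0, Z != 0, [/\ X + Y != 0, Y + Z != 0 & Z + X != 0]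
    & [/\ X - Y != 0, Y - Z != 0 & Z - X != 0]].
Proof.
case=> /unitc_ccross_neq0[-> -> -> ->] /unitc_ccross_neq0[_ -> -> ->].
by case/unitc_ccross_neq0=> _ _ -> ->.
Qed.

Lemma vertexIE Y Z u : ccross (unitc Y) (unitc Z) != 0 ->
  cdot u (unitc Y) = 2 * r -> cdot u (unitc Z) = 2 * r -> u = vertexI Y Z.
Proof.
move=> nd eY eZ; have [nY nZ sYZ _] := unitc_ccross_neq0 nd.
by apply: (cdot_inj2 nd); rewrite ?eY ?eZ /cdot /=; field_nz.
Qed.

Lemma orthoIE X Y Z h : nonparallel3 X Y Z ->
  cdot (h - vertexI Z X) (- vertexI X Y) = 0 ->
  cdot h (vertexI X Y - vertexI Z X) = 0 -> h = orthoI X Y Z.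
Proof.
case/nonparallel3_neq0=> nX nY nZ [sXY sYZ sZX] [_ dYZ _] perpB perpI.
have nd : ccross (- vertexI X Y) (vertexI X Y - vertexI Z X) != 0.
  have -> : ccross (- vertexI X Y) (vertexI X Y - vertexI Z X)
          = - (4 * r ^+ 2 * X * (Y - Z) / ((X + Y) * (Z + X))).
    by rewrite /ccross /=; field_nz.
  by rewrite oppr_eq0 !mulf_neq0 ?invr_eq0 ?mulf_neq0 ?expf_neq0 ?pnatr_eq0.
apply: (cdot_inj2 nd).
- by move/eqP: perpB; rewrite cdotBl subr_eq0 => /eqP ->; rewrite /cdot /=; field_nz.
- by rewrite perpI /cdot /=; field_nz.
Qed.

Lemma orthoI_neq0 X Y Z : nonparallel3 X Y Z -> orthoI X Y Z != 0.
Proof.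
case/nonparallel3_neq0=> nX nY nZ [sXY sYZ sZX] _.
apply: contra_neq (_ : (orthoI X Y Z).1 != 0) => [-> //|].
by rewrite /= !mulf_neq0 ?invr_eq0 ?mulf_neq0 ?expf_neq0 ?pnatr_eq0.
Qed.

Lemma circumIE X Y Z o : nonparallel3 X Y Z ->
  ccross (orthoI Y Z X - vertexI Y Z) (orthoI Z X Y - vertexI Y Z) != 0 ->
  cnorm (o - vertexI Y Z) = cnorm (o - orthoI Y Z X) ->
  cnorm (o - vertexI Y Z) = cnorm (o - orthoI Z X Y) -> o = circumI X Y Z.
Proof.
case/nonparallel3_neq0=> nX nY nZ [sXY sYZ sZX] _ nd eB eC.
by apply: (circumcenter_unique nd eB eC); rewrite /cnorm /=; field_nz.
Qed.

Lemma centerIE X Y Z o : nonparallel3 X Y Z ->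
  ccross (circumI Y Z X - circumI X Y Z) (circumI Z X Y - circumI X Y Z) != 0 ->
  cnorm (o - circumI X Y Z) = cnorm (o - circumI Y Z X) ->
  cnorm (o - circumI X Y Z) = cnorm (o - circumI Z X Y) -> o = centerI X Y Z.
Proof.
case/nonparallel3_neq0=> nX nY nZ [sXY sYZ sZX] _ nd eB eC.
by apply: (circumcenter_unique nd eB eC); rewrite /cnorm /=; field_nz.
Qed.

Lemma circumI_ncollinear X Y Z : nonparallel3 X Y Z ->
  ccross (circumI Y Z X - circumI X Y Z) (circumI Z X Y - circumI X Y Z) != 0 ->
  X + Y + Z != 0 /\ X * Y + Y * Z + Z * X != 0.
Proof.
case/nonparallel3_neq0=> nX nY nZ [sXY sYZ sZX] _.
have -> : ccross (circumI Y Z X - circumI X Y Z) (circumI Z X Y - circumI X Y Z)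
  = (X + Y + Z) * (X * Y + Y * Z + Z * X)
    * (4 * r ^+ 2 * (X - Y) * (X - Z) * (Z - Y) / ((X + Y) * (Y + Z) * (Z + X)) ^+ 2).
  by rewrite /ccross /=; field_nz.
by rewrite !mulf_eq0 !negb_or => /andP[/andP[-> ->] _].
Qed.

Lemma circumI_subE X Y Z : nonparallel3 X Y Z ->
  circumI Z X Y - circumI Y Z X =
  (2 * r * X * (Y - Z) * (X * Y + Y * Z + Z * X) / ((X + Y) * (Y + Z) * (Z + X)),
   - (2 * r * (Y - Z) * (X + Y + Z)) / ((X + Y) * (Y + Z) * (Z + X))).
Proof.
case/nonparallel3_neq0=> nX nY nZ [sXY sYZ sZX] _.
by congr pair; rewrite /=; field_nz.
Qed.

Lemma reflect_centerI X Y Z : nonparallel3 X Y Z ->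
  X + Y + Z != 0 -> X * Y + Y * Z + Z * X != 0 ->
  ccross (orthoI X Y Z) (creflect (circumI Y Z X) (circumI Z X Y) (centerI X Y Z)) = 0.
Proof.
move=> dirs s1 s2; rewrite /creflect circumI_subE //.
have [nX nY nZ [sXY sYZ sZX] [_ dYZ _]] := nonparallel3_neq0 dirs.
by rewrite /ccross /=; field_nz.
Qed.

Lemma reflect_centroidI X Y Z : nonparallel3 X Y Z ->
  X + Y + Z != 0 -> X * Y + Y * Z + Z * X != 0 ->
  ccross (orthoI X Y Z) (creflect (circumI Y Z X) (circumI Z X Y)
    (ccentroid (circumI X Y Z) (circumI Y Z X) (circumI Z X Y))) = 0.
Proof.
move=> dirs s1 s2; rewrite /creflect circumI_subE //.
have [nX nY nZ [sXY sYZ sZX] [_ dYZ _]] := nonparallel3_neq0 dirs.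
by rewrite /ccross /=; field_nz.
Qed.

End IncircleCoordinates.

Section PlaneGeometry.
Variable R : rcfType.
Implicit Types (d u v A B C P Q S T U V X W : point R).

Lemma pt_neq P Q : P <> Q -> P.1 != Q.1 \/ P.2 != Q.2.
Proof.
case: P Q => [p1 p2] [q1 q2] /= PQ.
have [e1|] := eqVneq p1 q1; last by left.
have [e2|] := eqVneq p2 q2; last by right.
by case: PQ; rewrite e1 e2.
Qed.

Lemma sqdist_eq0 P Q : sqdist P Q = 0 -> P = Q.
Proof.
case: P Q => [p1 p2] [q1 q2]; rewrite /sqdist /dot /psub /= => /eqP.
rewrite paddr_eq0 -?expr2 ?sqr_ge0 // !sqrf_eq0 !subr_eq0.
by case/andP => /eqP -> /eqP ->.
Qed.

Lemma dist_gt0 P Q : P <> Q -> 0 < dist P Q.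
Proof.
move=> PQ; rewrite /dist sqrtr_gt0 lt_def; apply/andP; split.
  by apply/eqP => /sqdist_eq0.
by rewrite /sqdist /dot addr_ge0 // -expr2 sqr_ge0.
Qed.

Lemma sqr_dist P Q : dist P Q ^+ 2 = sqdist P Q.
Proof. by rewrite /dist sqr_sqrtr // /sqdist /dot addr_ge0 // -expr2 sqr_ge0. Qed.

Lemma ncollinear_neq A B C : ~ collinear A B C -> [/\ A <> B, B <> C & C <> A].
Proof. by move=> nc; split=> e; apply: nc; rewrite /collinear ?e /cross /psub /=; ring. Qed.

Lemma cross_parallel d u v : d.1 != 0 \/ d.2 != 0 ->
  cross d u = 0 -> cross d v = 0 -> cross u v = 0.
Proof.
case: d u v => [d1 d2] [u1 u2] [v1 v2]; rewrite /cross /= => nd eu ev.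
have e1 : d1 * (u1 * v2 - u2 * v1) = u1 * (d1 * v2 - d2 * v1) - v1 * (d1 * u2 - d2 * u1)
  by ring.
have e2 : d2 * (u1 * v2 - u2 * v1) = u2 * (d1 * v2 - d2 * v1) - v2 * (d1 * u2 - d2 * u1)
  by ring.
rewrite eu ev !mulr0 subrr in e1 e2.
by case: nd => nd; apply/eqP; [move/eqP: e1 | move/eqP: e2]; rewrite mulf_eq0 (negbTE nd).
Qed.

Lemma collinear_trans P Q S T U : P <> Q ->
  collinear P Q S -> collinear P Q T -> collinear P Q U -> collinear S T U.
Proof.
move=> PQ hS hT hU.
have nd : (psub Q P).1 != 0 \/ (psub Q P).2 != 0.
  by case: (pt_neq (nesym PQ)) => h; [left | right]; rewrite subr_eq0.
have lin W :
    cross (psub Q P) (psub W S) = cross (psub Q P) (psub W P) - cross (psub Q P) (psub S P).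
  by rewrite /cross /psub /=; ring.
by apply: (cross_parallel nd); rewrite lin; [rewrite hT | rewrite hU]; rewrite hS subrr.
Qed.

Lemma reflect_ptK P Q X : sqdist Q P != 0 -> reflect_pt P Q (reflect_pt P Q X) = X.
Proof.
case: P Q X => [p1 p2] [q1 q2] [x1 x2].
rewrite /reflect_pt /sqdist /dot /psub /padd /pscale /= => nz.
by congr pair; field.
Qed.

Lemma cross_reflect P Q S T U : sqdist Q P != 0 ->
  cross (psub (reflect_pt P Q T) (reflect_pt P Q S)) (psub (reflect_pt P Q U) (reflect_pt P Q S))
  = - cross (psub T S) (psub U S).
Proof.
case: P Q S T U => [p1 p2] [q1 q2] [s1 s2] [t1 t2] [u1 u2].
rewrite /reflect_pt /cross /sqdist /dot /psub /padd /pscale /= => nz.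
by field.
Qed.

Lemma collinear_reflect P Q S T U : sqdist Q P != 0 ->
  collinear S T U -> collinear (reflect_pt P Q S) (reflect_pt P Q T) (reflect_pt P Q U).
Proof. by move=> nz hU; rewrite /collinear cross_reflect // hU oppr0. Qed.

Lemma reflect_line P Q U V S T : sqdist Q P != 0 -> U <> V -> S <> T ->
  collinear S T (reflect_pt P Q U) -> collinear S T (reflect_pt P Q V) ->
  forall X, reflect_set P Q (line U V) X <-> line S T X.
Proof.
move=> nz UV ST hU hV X.
have hS : collinear (reflect_pt P Q U) (reflect_pt P Q V) S.
  by apply: (collinear_trans ST) => //; rewrite /collinear /cross /psub /=; ring.
have hT : collinear (reflect_pt P Q U) (reflect_pt P Q V) T.
  by apply: (collinear_trans ST) => //; rewrite /collinear /cross /psub /=; ring.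
have UV' : reflect_pt P Q U <> reflect_pt P Q V.
  by move=> e; apply: UV; rewrite -(reflect_ptK U nz) -(reflect_ptK V nz) e.
split.
- case=> W hW ->.
  exact: (collinear_trans UV' hS hT (collinear_reflect nz hW)).
- move=> hX; exists (reflect_pt P Q X); last by rewrite reflect_ptK.
  have := collinear_reflect nz (collinear_trans ST hU hV hX).
  by rewrite !reflect_ptK.
Qed.

Definition tangent_normal I (r : R) n P Q : Prop :=
  [/\ dot n n = 1, dot (psub P I) n = r & dot (psub Q I) n = r].

Definition side_normal P Q : point R :=
  pscale (dist P Q)^-1 ((psub Q P).2, - (psub Q P).1).

(* Signed inradius: twice the signed area of ABC over its perimeter. *)
Definition inradius A B C : R :=
  cross (psub B A) (psub C A) / (dist B C + dist C A + dist A B).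

Lemma inradius_neq0 A B C : ~ collinear A B C -> inradius A B C != 0.
Proof.
move=> nc; have [AB BC CA] := ncollinear_neq nc.
have s_gt0 : 0 < dist B C + dist C A + dist A B by rewrite !addr_gt0 // dist_gt0.
by rewrite mulf_neq0 ?invr_eq0 ?(gt_eqF s_gt0) //; apply/eqP.
Qed.

Lemma side_normal_unit P Q : P <> Q -> dot (side_normal P Q) (side_normal P Q) = 1.
Proof.
move=> PQ; have nd : dist P Q != 0 by rewrite gt_eqF // dist_gt0.
have e := sqr_dist P Q; rewrite /side_normal.
move: (dist P Q) nd e; case: P Q {PQ} => [p1 p2] [q1 q2] d nd.
rewrite /sqdist /dot /psub /pscale /= => e.
by rewrite -[1](divff (expf_neq0 2 nd)) [X in _ = X / _]e; field.
Qed.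

Lemma tangent_side_normal A B C : ~ collinear A B C ->
  tangent_normal (incenter A B C) (inradius A B C) (side_normal B C) B C.
Proof.
move=> nc; have [AB BC CA] := ncollinear_neq nc.
split; first exact: side_normal_unit.
all: rewrite /incenter /inradius /side_normal.
all: move: (dist_gt0 BC) (dist_gt0 CA) (dist_gt0 AB).
all: move: (dist B C) (dist C A) (dist A B) => a b c a_gt0 b_gt0 c_gt0.
all: have [na ns] : a != 0 /\ a + b + c != 0 by rewrite !gt_eqF // !addr_gt0.
all: case: A B C {nc AB BC CA} => [a1 a2] [b1 b2] [c1 c2].
all: by rewrite /dot /cross /psub /pscale /padd /=; field_nz.
Qed.

Lemma cross_side_normal A B C : ~ collinear A B C ->
  cross (side_normal C A) (side_normal A B) != 0.
Proof.
move=> nc; have [AB _ CA] := ncollinear_neq nc.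
have nb : dist C A != 0 by rewrite gt_eqF // dist_gt0.
have nc' : dist A B != 0 by rewrite gt_eqF // dist_gt0.
have -> : cross (side_normal C A) (side_normal A B)
          = cross (psub B A) (psub C A) / (dist C A * dist A B).
  by rewrite /side_normal /cross /pscale /psub /=; field_nz.
by rewrite mulf_neq0 ?invr_eq0 ?mulf_neq0 //; apply/eqP.
Qed.

Lemma incenter_rot A B C : incenter B C A = incenter A B C.
Proof.
rewrite /incenter (addrC (dist C A + dist A B)) addrA.
by rewrite /pscale /padd /=; congr pair; ring.
Qed.

Lemma inradius_rot A B C : inradius B C A = inradius A B C.
Proof.
rewrite /inradius (addrC (dist C A + dist A B)) addrA.
by congr (_ / _); rewrite /cross /psub /=; ring.
Qed.

Lemma centroid_rot A B C : centroid B C A = centroid A B C.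
Proof. by rewrite /centroid /pscale /padd /=; congr pair; ring. Qed.

Lemma circumcenter_rot O A B C : is_circumcenter O A B C -> is_circumcenter O B C A.
Proof. by case=> eB eC; split; rewrite -eB. Qed.

Lemma ncollinear_rot A B C : ~ collinear A B C -> ~ collinear B C A.
Proof.
move=> nc e; apply: nc; move: e; rewrite /collinear /cross /psub /= => e.
by rewrite -e; ring.
Qed.

End PlaneGeometry.

Section ComplexCoordinates.
Variable R : rcfType.
Local Open Scope complex_scope.
Implicit Types (u v P Q I X A B C : point R).

Definition toC u : R[i] := u.1 +i* u.2.
Definition cpair u : R[i] * R[i] := (toC u, conjc (toC u)).
Definition rel I P : R[i] * R[i] := cpair (psub P I).

Lemma rel_sub I P Q : cpair (psub P Q) = rel I P - rel I Q.
Proof.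
case: I P Q => [i1 i2] [p1 p2] [q1 q2]; rewrite /rel /cpair /toC /psub /=.
by congr pair; simpc; congr Complex; ring.
Qed.

Lemma rel_origin I : rel I I = 0.
Proof. by case: I => i1 i2; rewrite /rel /cpair /toC /psub /= !subrr; simpc. Qed.

Lemma dot_cpair u v : (dot u v)%:C * 2 = cdot (cpair u) (cpair v).
Proof.
case: u v => [u1 u2] [v1 v2]; rewrite /cdot /cpair /toC /dot /=; simpc.
by congr Complex; ring.
Qed.

Lemma cross_cpair u v : (cross u v)%:C * (2 * 'i) = ccross (cpair u) (cpair v).
Proof.
case: u v => [u1 u2] [v1 v2]; rewrite /ccross /cpair /toC /cross /=; simpc.
by congr Complex; ring.
Qed.

Lemma dot_cnorm u : (dot u u)%:C = cnorm (cpair u).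
Proof.
case: u => [u1 u2]; rewrite /cnorm /cpair /toC /dot /=; simpc.
by congr Complex; ring.
Qed.

Lemma cpair_unit u : dot u u = 1 -> cpair u = unitc (toC u).
Proof.
move=> u1; rewrite /unitc /cpair; congr pair.
have e : toC u * conjc (toC u) = 1 by rewrite -[LHS]dot_cnorm u1.
have nz : toC u != 0.
  by apply/eqP=> z0; move: e; rewrite z0 mul0r => /eqP; rewrite eq_sym oner_eq0.
by rewrite -[conjc _](mulKf nz) e mulr1.
Qed.

Lemma rel_centroid I A B C :
  rel I (centroid A B C) = ccentroid (rel I A) (rel I B) (rel I C).
Proof.
case: I A B C => [i1 i2] [a1 a2] [b1 b2] [c1 c2].
rewrite /rel /cpair /toC /centroid /ccentroid /psub /padd /pscale /=.
have -> : (3 : R[i]) = (3 : R)%:C by rewrite rmorph_nat.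
rewrite -fmorphV; simpc.
by congr pair; congr Complex; field_nz.
Qed.

Lemma reflect_ptC P Q X : sqdist Q P != 0 ->
  toC (psub (reflect_pt P Q X) P) * conjc (toC (psub Q P))
  = toC (psub Q P) * conjc (toC (psub X P)).
Proof.
case: P Q X => [p1 p2] [q1 q2] [x1 x2].
rewrite /toC /reflect_pt /sqdist /dot /psub /padd /pscale /= => nz.
by simpc; congr Complex; field.
Qed.

Lemma rel_reflect I P Q X : sqdist Q P != 0 ->
  rel I (reflect_pt P Q X) = creflect (rel I P) (rel I Q) (rel I X).
Proof.
move=> nz.
have nw : conjc (toC (psub Q P)) != 0.
  have e : (sqdist Q P)%:C = toC (psub Q P) * conjc (toC (psub Q P)) := dot_cnorm _.
  by apply: contra nz => /eqP w0; apply/eqP/complexI; rewrite e w0 mulr0.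
have ez : toC (psub (reflect_pt P Q X) P)
          = toC (psub Q P) / conjc (toC (psub Q P)) * conjc (toC (psub X P)).
  by rewrite mulrAC -reflect_ptC // mulfK.
rewrite /creflect -!(rel_sub I) -[LHS](subrK (rel I P)) -rel_sub /cpair ez.
move: (rel I P) (toC (psub Q P)) (toC (psub X P)) => [p1 p2] w x /=.
by rewrite !rmorphM fmorphV /= !conjcK addrC.
Qed.

Lemma twoi_neq0 : (2 * 'i : R[i]) != 0.
Proof. by rewrite mulf_neq0 ?pnatr_eq0 // eq_complex /= negb_and oner_eq0 orbT. Qed.

Lemma orthocenter_rel I H P Q : is_orthocenter H P I Q ->
  cdot (rel I H - rel I P) (- rel I Q) = 0 /\ cdot (rel I H) (rel I Q - rel I P) = 0.
Proof.
case=> perpP perpI _; split.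
- by rewrite -[- rel I Q]sub0r -(rel_origin I) -!rel_sub -dot_cpair perpP rmorph0 mul0r.
- by rewrite -rel_sub -dot_cpair perpI rmorph0 mul0r.
Qed.

Lemma circumcenter_rel I O P Q S : is_circumcenter O P Q S ->
  cnorm (rel I O - rel I P) = cnorm (rel I O - rel I Q) /\
  cnorm (rel I O - rel I P) = cnorm (rel I O - rel I S).
Proof.
have d T : cnorm (rel I O - rel I T) = (sqdist O T)%:C by rewrite -rel_sub -dot_cnorm.
by case=> eQ eS; rewrite !d -eQ -eS.
Qed.

Lemma cross_cpair_neq0 u v : cross u v != 0 -> ccross (cpair u) (cpair v) != 0.
Proof.
move=> nc; rewrite -cross_cpair mulf_neq0 ?twoi_neq0 //.
by rewrite -(rmorph0 (real_complex R)) (inj_eq (@complexI R)).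
Qed.

Lemma ncollinear_rel I P Q S : ~ collinear P Q S ->
  ccross (rel I Q - rel I P) (rel I S - rel I P) != 0.
Proof. by move=> nc; rewrite -!rel_sub cross_cpair_neq0 //; apply/eqP. Qed.

Lemma collinear_origin I H S : ccross (rel I H) (rel I S) = 0 -> collinear H I S.
Proof.
move=> e; apply: complexI; apply: (mulIf twoi_neq0).
rewrite cross_cpair !(rel_sub I) rel_origin rmorph0 mul0r.
move: (rel I H) (rel I S) e => h s; rewrite /ccross /= => e.
by transitivity (- (h.2 * s.1 - h.1 * s.2)); [ring | rewrite e oppr0].
Qed.

Lemma tangent_normal_rel I (r : R) n P Q : tangent_normal I r n P Q ->
  cdot (rel I P) (unitc (toC n)) = 2 * r%:C /\ cdot (rel I Q) (unitc (toC n)) = 2 * r%:C.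
Proof. by case=> u eP eQ; rewrite -cpair_unit // -!dot_cpair eP eQ mulrC. Qed.

Lemma incircle_coords A B C : ~ collinear A B C ->
  exists r X Y Z : R[i],
  [/\ r != 0, nonparallel3 X Y Z, rel (incenter A B C) A = vertexI r Y Z,
      rel (incenter A B C) B = vertexI r Z X & rel (incenter A B C) C = vertexI r X Y].
Proof.
move=> nc; have nBCA := ncollinear_rot nc; have nCAB := ncollinear_rot nBCA.
have t1 := tangent_side_normal nc.
have t2 := tangent_side_normal nBCA; rewrite incenter_rot inradius_rot in t2.
have t3 := tangent_side_normal nCAB; rewrite 2!incenter_rot 2!inradius_rot in t3.
move: (t1) (t2) (t3) => [u1 _ _] [u2 _ _] [u3 _ _].
have [B1 C1] := tangent_normal_rel t1.
have [C2 A2] := tangent_normal_rel t2.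
have [A3 B3] := tangent_normal_rel t3.
have dirs : nonparallel3 (toC (side_normal B C)) (toC (side_normal C A)) (toC (side_normal A B)).
  by split; rewrite -!cpair_unit // cross_cpair_neq0 //; apply: cross_side_normal.
have [nd23 nd31 nd12] := dirs.
exists (inradius A B C)%:C, (toC (side_normal B C)), (toC (side_normal C A)),
  (toC (side_normal A B)).
split => //.
- by rewrite -(rmorph0 (real_complex R)) (inj_eq (@complexI R)) inradius_neq0.
- exact: vertexIE nd23 A2 A3.
- exact: vertexIE nd31 B3 B1.
- exact: vertexIE nd12 C1 C2.
Qed.

End ComplexCoordinates.

Lemma reflect_euler_line (R : rcfType) (A B C I HA HB HC OA OB OC O G : point R) :
  ~ collinear A B C -> I = incenter A B C ->
  is_orthocenter HA B I C -> is_orthocenter HB C I A -> is_orthocenter HC A I B ->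
  ~ collinear A HB HC -> ~ collinear B HC HA -> ~ collinear C HA HB ->
  is_circumcenter OA A HB HC -> is_circumcenter OB B HC HA -> is_circumcenter OC C HA HB ->
  ~ collinear OA OB OC -> is_circumcenter O OA OB OC ->
  G = centroid OA OB OC -> O <> G ->
  forall P, reflect_set OB OC (line O G) P <-> line HA I P.
Proof.
move=> nABC eI hA hB hC nA nB nC cA cB cC nO cO eG OG.
have [r [X [Y [Z [nr dX eA eB eC]]]]] := incircle_coords nABC.
rewrite -eI in eA eB eC.
have dY := nonparallel3_rot dX; have dZ := nonparallel3_rot dY.
have eHA : rel I HA = orthoI r X Y Z.
  by case: (orthocenter_rel hA); rewrite eB eC; apply: orthoIE.
have eHB : rel I HB = orthoI r Y Z X.
  by case: (orthocenter_rel hB); rewrite eC eA; apply: orthoIE.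
have eHC : rel I HC = orthoI r Z X Y.
  by case: (orthocenter_rel hC); rewrite eA eB; apply: orthoIE.
have eOA : rel I OA = circumI r X Y Z.
  case: (circumcenter_rel I cA); move: (ncollinear_rel I nA).
  by rewrite eA eHB eHC; apply: circumIE.
have eOB : rel I OB = circumI r Y Z X.
  case: (circumcenter_rel I cB); move: (ncollinear_rel I nB).
  by rewrite eB eHC eHA; apply: circumIE.
have eOC : rel I OC = circumI r Z X Y.
  case: (circumcenter_rel I cC); move: (ncollinear_rel I nC).
  by rewrite eC eHA eHB; apply: circumIE.
have nd := ncollinear_rel I nO; rewrite eOA eOB eOC in nd.
have eO : rel I O = centerI r X Y Z.
  by case: (circumcenter_rel I cO); rewrite eOA eOB eOC; apply: centerIE.
have [sum_neq0 sigma2_neq0] := circumI_ncollinear dX nd.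
have nz : sqdist OC OB != 0.
  by have [_ OBC _] := ncollinear_neq nO; apply/eqP => /sqdist_eq0/esym.
have HAI : HA <> I.
  by move=> e; move: (orthoI_neq0 nr dX); rewrite -eHA e rel_origin eqxx.
apply: (reflect_line nz OG HAI); apply: collinear_origin; rewrite rel_reflect //.
- by rewrite eHA eOB eOC eO reflect_centerI.
- by rewrite eG rel_centroid eHA eOA eOB eOC reflect_centroidI.
Qed.

Theorem proposition5p7 (R : rcfType) (A B C HA HB HC OA OB OC O : point R) :
  ~ collinear A B C ->
  is_orthocenter HA B (incenter A B C) C ->
  is_orthocenter HB C (incenter A B C) A ->
  is_orthocenter HC A (incenter A B C) B ->
  ~ collinear A HB HC -> ~ collinear B HC HA -> ~ collinear C HA HB ->
  is_circumcenter OA A HB HC ->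
  is_circumcenter OB B HC HA ->
  is_circumcenter OC C HA HB ->
  ~ collinear OA OB OC ->
  is_circumcenter O OA OB OC ->
  O <> centroid OA OB OC ->
  let I := incenter A B C in
  let euler := line O (centroid OA OB OC) in
  [/\ forall X, reflect_set OB OC euler X <-> line HA I X,
      forall X, reflect_set OC OA euler X <-> line HB I X &
      forall X, reflect_set OA OB euler X <-> line HC I X].
Proof.
move=> nABC hA hB hC nA nB nC cA cB cC nO cO OG I euler.
have nBCA := ncollinear_rot nABC; have nCAB := ncollinear_rot nBCA.
have nOBCA := ncollinear_rot nO; have nOCAB := ncollinear_rot nOBCA.
have cO' := circumcenter_rot cO; have cO'' := circumcenter_rot cO'.
have eI' : I = incenter B C A by rewrite incenter_rot.
have eI'' : I = incenter C A B by rewrite -[incenter C A B]incenter_rot.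
have eG' : centroid OA OB OC = centroid OB OC OA by rewrite [RHS]centroid_rot.
have eG'' : centroid OA OB OC = centroid OC OA OB by rewrite -[centroid OC OA OB]centroid_rot.
split.
- exact: reflect_euler_line nABC erefl hA hB hC nA nB nC cA cB cC nO cO erefl OG.
- exact: reflect_euler_line nBCA eI' hB hC hA nB nC nA cB cC cA nOBCA cO' eG' OG.
- exact: reflect_euler_line nCAB eI'' hC hA hB nC nA nB cC cA cB nOCAB cO'' eG'' OG.
Qed.
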